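(* Let $\mathcal D$ be a finite nonempty set, and let $\mathcal A^{\mathcal D}_{P,R}$ be the subring of $\mathcal H^{\mathcal D}_{P,R}$ consisting of the free $\mathbb Z$-algebra generated by the decorated planar rooted trees (equivalently, the $\mathbb Z$-span of the planar forests). Then $(e_F)_F$, $F$ running over all planar forests decorated by $\mathcal D$, is a $\mathbb Z$-basis of $\mathcal A^{\mathcal D}_{P,R}$.
   Context: $\mathcal H^{\mathcal D}_{P,R}$ is the free associative unital $\mathbb Q$-algebra on the set of planar rooted trees (finite trees with a root, embedded in the plane, edges oriented away from the root) decorated by $\mathcal D$; its basis is the set of planar forests $t_1\cdots t_n$ ($1$ = empty forest). Coproduct: $\Delta(F)=\sum_cP^c(F)\otimes R^c(F)$ over all cuts $c=(c_i)$ of $F=t_1\cdots t_n$, each $c_i$ being the empty cut of $t_i$ ($P=1,R=t_i$), the total cut ($P=t_i,R=1$), or an admissible cut (a nonempty set of edges of $t_i$ such that every oriented path meets at most one of them, with $R^{c_i}(t_i)$ the component of the root and $P^{c_i}(t_i)$ the left-to-right planar forest of the other components); $P^c(F)=\prod_iP^{c_i}(t_i)$, $R^c(F)=\prod_iR^{c_i}(t_i)$; counit $\varepsilon(F)=0$ for $F\ne1$. $B_d^+$ grafts $t_1\cdots t_n$ (in order) on a new root decorated by $d$; $\bullet_d=B_d^+(1)$; $\gamma_d$ is the linear map with $\gamma_d(1)=0$, $\gamma_d(t_1\cdots t_n)=t_1\cdots t_{n-1}$ if $t_n=\bullet_d$, $0$ otherwise. There is a unique bilinear form $(\,,\,)$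 on $\mathcal H^{\mathcal D}_{P,R}$ with $(1,x)=\varepsilon(x)$, $(x_1x_2,y)=(x_1\otimes x_2,\Delta(y))$ and $(B_d^+(x),y)=(x,\gamma_d(y))$; it is nondegenerate, and $(e_F)_F$ denotes the basis of $\mathcal H^{\mathcal D}_{P,R}$ defined by $(e_F,G)=\delta_{F,G}$ for all planar forests $G$. *)

From HB Require Import structures.
From mathcomp Require Import all_boot all_order all_algebra.
Set Implicit Arguments. Unset Strict Implicit. Unset Printing Implicit Defensive.
Import Order.TTheory GRing.Theory Num.Theory.
Local Open Scope ring_scope.

Section PlanarTrees.
Variable D : eqType.

Inductive ptree : Type := Node of D & seq ptree.

(* planar forests t_1 ... t_n, the empty forest being the unit 1 *)
Definition forest := seq ptree.

Definition Bplus (d : D) (F : forest) : ptree := Node d F.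

Fixpoint enc (t : ptree) : GenTree.tree D :=
  let: Node d ch := t in GenTree.Node 0 (GenTree.Leaf d :: map enc ch).

Fixpoint dec (g : GenTree.tree D) : option ptree :=
  match g with
  | GenTree.Node _ (GenTree.Leaf d :: l) => Some (Node d (pmap dec l))
  | _ => None
  end.

Lemma encK : pcancel enc dec.
Proof.
rewrite /pcancel; fix IH 1; case=> d ch /=; congr (Some (Node d _)).
elim: ch => [|c ch IHch] //=.
by rewrite IH /= IHch.
Qed.

HB.instance Definition _ := Equality.copy ptree (pcan_type encK).

(* acuts t : the list of (P^c(t), R^c(t)) for c the empty cut or an
   admissible cut of t (each cut listed exactly once); P^c(t) is the
   left-to-right planar forest of the cut-off components. *)
Fixpoint acuts (t : ptree) : seq (forest * ptree) :=
  let: Node d ch := t in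
  let fix go (l : seq ptree) : seq (forest * seq ptree) :=
    match l with
    | [::] => [:: ([::], [::])]
    | c :: l' =>
        [seq (p.1 ++ q.1, p.2 ++ q.2)
           | p <- ([:: ([:: c], [::])] ++ [seq (x.1, [:: x.2]) | x <- acuts c]),
             q <- go l']
    end in
  [seq (p.1, Node d p.2) | p <- go ch].

Definition tcuts (t : ptree) : seq (forest * forest) :=
  ([:: t], [::]) :: [seq (x.1, [:: x.2]) | x <- acuts t].

(* Delta(F) = sum over cuts c of P^c(F) (x) R^c(F), as a list of pairs
   (with multiplicity) *)
Fixpoint coprod (F : forest) : seq (forest * forest) :=
  match F with
  | [::] => [:: ([::], [::])]
  | t :: F' => [seq (p.1 ++ q.1, p.2 ++ q.2) | p <- tcuts t, q <- coprod F']
  end.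

(* gamma_d : t_1 ... t_n |-> t_1 ... t_{n-1} if t_n = bullet_d, else 0;
   None encodes 0 *)
Definition is_bullet (d : D) (t : ptree) : bool :=
  match t with Node d' [::] => d' == d | _ => false end.

Definition gamma (d : D) (G : forest) : option forest :=
  match rev G with
  | t :: rG => if is_bullet d t then Some (rev rG) else None
  | [::] => None
  end.

(* (1, y) = eps(y); (t x2, y) = (t (x) x2, Delta y) for x2 <> 1;
   (B_d^+(x), y) = (x, gamma_d(y)). *)
Fixpoint pairL (pt : ptree -> forest -> rat) (F G : forest) {struct F} : rat :=
  match F with
  | [::] => if G is [::] then 1 else 0
  | t :: F' =>
      match F' with
      | [::] => pt t G
      | _ :: _ => \sum_(p <- coprod G) pt t p.1 * pairL pt F' p.2
      end
  end.

Fixpoint pairT (t : ptree) (G : forest) {struct t} : rat :=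
  let: Node d ch := t in
  match gamma d G with
  | Some G' => pairL pairT ch G'
  | None => 0
  end.

Definition pairF : forest -> forest -> rat := pairL pairT.

(* An element of H is represented by a formal finite Q-linear combination
   of planar forests; two representatives denote the same element iff they
   have the same coefficients. *)
Definition Hel := seq (rat * forest).

Definition coef (x : Hel) (F : forest) : rat :=
  \sum_(p <- x | p.2 == F) p.1.

Definition basisH (F : forest) : Hel := [:: (1, F)].

Definition scaleH (a : rat) (x : Hel) : Hel := [seq (a * q.1, q.2) | q <- x].

Definition form (x y : Hel) : rat :=
  \sum_(p <- x) \sum_(q <- y) p.1 * q.1 * pairF p.2 q.2.

Definition dual_basis (e : forest -> Hel) : Prop :=
  forall F G : forest, form (e F) (basisH G) = (F == G)%:R.

(* membership in A^D_{P,R} = Z-span of the planar forests *)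
Definition inA (x : Hel) : Prop := forall G : forest, coef x G \is a Num.int.

Definition zcomb (e : forest -> Hel) (c : seq (int * forest)) : Hel :=
  flatten [seq scaleH (p.1%:~R) (e p.2) | p <- c].

Definition is_Zbasis_of_A (e : forest -> Hel) : Prop :=
  [/\ forall F, inA (e F),
      forall c : seq (int * forest), uniq (unzip2 c) ->
        (forall G, coef (zcomb e c) G = 0) -> forall p, p \in c -> p.1 = 0
    & forall x, inA x -> exists c : seq (int * forest),
        forall G, coef x G = coef (zcomb e c) G].

End PlanarTrees.

(* The pairing takes integer values on forests and vanishes unless both forests
   have the same number of vertices, so every homogeneous component of H is
   finite-dimensional.  It therefore suffices to show that the dual elements e_G
   have integer coefficients: nondegeneracy on each component then makes e
   unique, and x = sum_F (x, F) e_F writes any x in A as an integral combination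
   of the e_F.
   Integrality of e_G is proved by induction on the number of vertices of G and
   then on that of its last tree.  If G = G' bullet_d then e_G = B_d^+(e_G').
   If G = G' B_d^+(C) with C <> 1, then (e_C e_(G' bullet_d), K) counts the cuts
   of K with pruned forest C and trunk G' bullet_d; this is delta_(G,K) as soon
   as the last tree of K has more vertices than C, and the remaining forests K
   of the same weight have a smaller last tree, so they are corrected using the
   induction hypothesis. *)

From Pilot Require Import Defs.
From mathcomp Require Import all_boot all_order all_algebra.
From mathcomp Require Import zify.
Set Implicit Arguments. Unset Strict Implicit. Unset Printing Implicit Defensive.
Import GRing.Theory Num.Theory.
Local Open Scope ring_scope.

Section Trees.
Variable D : eqType.
Local Notation tree := (ptree D).
Local Notation forest := (forest D).

Lemma ptree_forest_ind (Pt : tree -> Prop) (Pf : forest -> Prop) :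
  Pf [::] -> (forall t F, Pt t -> Pf F -> Pf (t :: F)) ->
  (forall d ch, Pf ch -> Pt (Node d ch)) -> (forall t, Pt t) /\ (forall F, Pf F).
Proof.
move=> Pnil Pcons Pnode.
have Ptree : forall t, Pt t.
  fix IH 1 => -[d ch]; apply: Pnode.
  by elim: ch => [|c ch IHch] //; apply: Pcons.
by split=> //; elim=> [|t F IHF] //; apply: Pcons.
Qed.

Lemma Node_eq (d e : D) (ch ch' : forest) :
  (Node d ch == Node e ch') = (d == e) && (ch == ch').
Proof. by apply/eqP/andP => [[-> ->] | [/eqP -> /eqP ->]]. Qed.

Fixpoint tweight (t : tree) : nat :=
  let: Node _ ch := t in (sumn (map tweight ch)).+1.

Definition weight (F : forest) : nat := sumn (map tweight F).

Lemma weight_cons t F : weight (t :: F) = (tweight t + weight F)%N.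
Proof. by []. Qed.

Lemma weight1 t : weight [:: t] = tweight t.
Proof. by rewrite /weight /= addn0. Qed.

Lemma weight_cat F1 F2 : weight (F1 ++ F2) = (weight F1 + weight F2)%N.
Proof. by rewrite /weight map_cat sumn_cat. Qed.

Lemma weight_rcons F t : weight (rcons F t) = (weight F + tweight t)%N.
Proof. by rewrite -cats1 weight_cat /weight /= addn0. Qed.

Lemma tweight_Node d ch : tweight (Node d ch) = (weight ch).+1.
Proof. by []. Qed.

Lemma tweight_gt0 t : (0 < tweight t)%N.
Proof. by case: t. Qed.

Lemma weight_eq0 F : (weight F == 0%N) = (F == [::]).
Proof. by case: F => [|[d ch] F]. Qed.

Lemma eq_cat_weight (C a b : forest) : (weight C <= weight b)%N ->
  (C == a ++ b) = (a == [::]) && (C == b).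
Proof.
case: a => [|t a] //= le_Cb; apply/negbTE/eqP => /(congr1 weight).
have := tweight_gt0 t; rewrite weight_cons weight_cat; lia.
Qed.

End Trees.

Section Coproduct.
Variable D : eqType.
Local Notation tree := (ptree D).
Local Notation forest := (forest D).

Lemma coprod_nil : coprod [::] = [:: ([::] : forest, [::] : forest)].
Proof. by []. Qed.

Lemma coprod_cons (t : tree) (F : forest) :
  coprod (t :: F) = [seq (p.1 ++ q.1, p.2 ++ q.2) | p <- tcuts t, q <- coprod F].
Proof. by []. Qed.

Lemma tcuts_Node d (ch : forest) :
  tcuts (Node d ch) =
  ([:: Node d ch], [::]) :: [seq (p.1, [:: Node d p.2]) | p <- coprod ch].
Proof.
by rewrite /tcuts /acuts -map_comp; congr (_ :: map _ _).
Qed.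

Lemma coprod1 (t : tree) : coprod [:: t] = tcuts t.
Proof.
rewrite coprod_cons coprod_nil; elim: (tcuts t) => [|[a b] l IH] //.
by rewrite [LHS]/= IH !cats0.
Qed.

Lemma weight_cuts :
  (forall t : tree, forall p, p \in tcuts t -> weight p.1 + weight p.2 = tweight t)%N /\
  (forall F : forest, forall p, p \in coprod F -> weight p.1 + weight p.2 = weight F)%N.
Proof.
apply: ptree_forest_ind.
- by move=> p; rewrite coprod_nil inE => /eqP ->.
- move=> t F Ht HF p; rewrite coprod_cons => /allpairsP [[a b] [/= /Ht Ha /HF Hb ->]].
  by rewrite /= !weight_cat weight_cons -Ha -Hb addnACA.
- move=> d ch IH p; rewrite tcuts_Node inE => /predU1P [-> | /mapP [q /IH Hq ->]].
    by rewrite weight1 addn0.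
  by rewrite weight1 !tweight_Node addnS Hq.
Qed.

Lemma weight_coprod (F : forest) p :
  p \in coprod F -> (weight p.1 + weight p.2)%N = weight F.
Proof. exact: (proj2 weight_cuts). Qed.

Section Sums.
Variable R : nmodType.

Lemma big_coprod_cons (t : tree) (F : forest) (g : forest * forest -> R) :
  \sum_(p <- coprod (t :: F)) g p =
  \sum_(p <- tcuts t) \sum_(q <- coprod F) g (p.1 ++ q.1, p.2 ++ q.2).
Proof. by rewrite coprod_cons big_allpairs_dep. Qed.

Lemma big_tcuts_Node d (ch : forest) (g : forest * forest -> R) :
  \sum_(p <- tcuts (Node d ch)) g p =
  g ([:: Node d ch], [::]) + \sum_(p <- coprod ch) g (p.1, [:: Node d p.2]).
Proof. by rewrite tcuts_Node big_cons big_map. Qed.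

Lemma big_coprod_cat (F1 F2 : forest) (g : forest * forest -> R) :
  \sum_(p <- coprod (F1 ++ F2)) g p =
  \sum_(p <- coprod F1) \sum_(q <- coprod F2) g (p.1 ++ q.1, p.2 ++ q.2).
Proof.
elim: F1 g => [|t F1 IH] g; first by rewrite coprod_nil big_seq1; apply: eq_bigr => -[].
rewrite cat_cons !big_coprod_cons; apply: eq_bigr => p _; rewrite IH.
by apply: eq_bigr => q _; apply: eq_bigr => r _; rewrite !catA.
Qed.

Lemma exchange_big_mid (A B X Y : Type) (sA : seq A) (sB : seq B)
    (sX : A -> seq X) (sY : B -> seq Y) (h : A -> X -> B -> Y -> R) :
  \sum_(a <- sA) \sum_(b <- sB) \sum_(x <- sX a) \sum_(y <- sY b) h a x b y =
  \sum_(a <- sA) \sum_(x <- sX a) \sum_(b <- sB) \sum_(y <- sY b) h a x b y.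
Proof. by apply: eq_bigr => a _; rewrite exchange_big. Qed.

Lemma exchange_big_pairs (A B X Y : Type) (sA : seq A) (sB : seq B)
    (sX : A -> seq X) (sY : B -> seq Y) (h : A -> X -> B -> Y -> R) :
  \sum_(a <- sA) \sum_(x <- sX a) \sum_(b <- sB) \sum_(y <- sY b) h a x b y =
  \sum_(b <- sB) \sum_(y <- sY b) \sum_(a <- sA) \sum_(x <- sX a) h a x b y.
Proof.
rewrite -exchange_big_mid exchange_big; apply: eq_bigr => b _.
by rewrite -exchange_big; apply: eq_bigr => a _; rewrite exchange_big.
Qed.

Definition coassociative_on (l : seq (forest * forest)) : Prop :=
  forall f : forest -> forest -> forest -> R,
  \sum_(p <- l) \sum_(q <- coprod p.2) f p.1 q.1 q.2 =
  \sum_(p <- l) \sum_(q <- coprod p.1) f q.1 q.2 p.2.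

Lemma coassociative_cuts :
  (forall t : tree, coassociative_on (tcuts t)) /\
  (forall F : forest, coassociative_on (coprod F)).
Proof.
apply: ptree_forest_ind.
- by move=> f; rewrite coprod_nil !big_seq1.
- move=> t F Ht HF f; rewrite !big_coprod_cons.
  under eq_bigr do under eq_bigr do rewrite big_coprod_cat.
  rewrite exchange_big_mid.
  under eq_bigr do under eq_bigr => x _ do
    rewrite (HF (fun u v w => f (_ ++ u) (x.1 ++ v) (x.2 ++ w))).
  rewrite exchange_big_pairs.
  under eq_bigr do under eq_bigr => y _ do
    rewrite (Ht (fun u v w => f (u ++ y.1) (v ++ y.2) (w ++ _))).
  rewrite -exchange_big_pairs -exchange_big_mid.
  by under [RHS]eq_bigr do under eq_bigr do rewrite big_coprod_cat.
- move=> d ch IH f; rewrite !big_tcuts_Node coprod_nil coprod1 big_tcuts_Node big_seq1.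
  rewrite -!addrA; congr (_ + _).
  under eq_bigr do rewrite coprod1 big_tcuts_Node.
  by rewrite big_split /= (IH (fun u v w => f u v [:: Node d w])).
Qed.

Lemma coprod_coassoc (F : forest) (f : forest -> forest -> forest -> R) :
  \sum_(p <- coprod F) \sum_(q <- coprod p.2) f p.1 q.1 q.2 =
  \sum_(p <- coprod F) \sum_(q <- coprod p.1) f q.1 q.2 p.2.
Proof. exact: (proj2 coassociative_cuts). Qed.

End Sums.

Section Counit.
Variable R : pzSemiRingType.

Lemma coprod_counitr (F : forest) (g : forest -> R) :
  \sum_(p <- coprod F) (p.2 == [::])%:R * g p.1 = g F.
Proof.
elim: F g => [|t F IH] g; first by rewrite coprod_nil big_seq1 mul1r.
rewrite big_coprod_cons.
transitivity (\sum_(p <- tcuts t) (p.2 == [::])%:R * g (p.1 ++ F)).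
  apply: eq_bigr => p _; rewrite -(IH (fun x => (p.2 == [::])%:R * g (p.1 ++ x))).
  apply: eq_bigr => q _; rewrite mulrA -natrM mulnb.
  by case: (p.2); case: (q.2).
rewrite /tcuts big_cons big_map big1 ?addr0 ?mul1r // => p _.
by rewrite mul0r.
Qed.

Lemma coprod_counitl (F : forest) (g : forest -> R) :
  \sum_(p <- coprod F) (p.1 == [::])%:R * g p.2 = g F.
Proof.
move: F g; apply: (proj2 (@ptree_forest_ind _
  (fun t => forall g : forest -> R,
     \sum_(p <- tcuts t) (p.1 == [::])%:R * g p.2 = g [:: t])
  (fun F => forall g : forest -> R,
     \sum_(p <- coprod F) (p.1 == [::])%:R * g p.2 = g F) _ _ _)).
- by move=> g; rewrite coprod_nil big_seq1 mul1r.
- move=> t F Ht HF g; rewrite big_coprod_cons -(Ht (fun x => g (x ++ F))).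
  apply: eq_bigr => p _; rewrite -(HF (fun x => (p.1 == [::])%:R * g (p.2 ++ x))).
  apply: eq_bigr => q _; rewrite mulrA -natrM mulnb.
  by case: (p.1); case: (q.1).
- move=> d ch IH g; rewrite big_tcuts_Node /= mul0r add0r.
  exact: (IH (fun x => g [:: Node d x])).
Qed.

End Counit.

End Coproduct.

Section Pairing.
Variable D : eqType.
Local Notation tree := (ptree D).
Local Notation forest := (forest D).

Lemma pairF_nil (G : forest) : pairF [::] G = (G == [::])%:R.
Proof. by case: G. Qed.

Lemma pairF1 (t : tree) (G : forest) : pairF [:: t] G = pairT t G.
Proof. by []. Qed.

Lemma pairT_Node d (ch G : forest) :
  pairT (Node d ch) G = if gamma d G is Some G' then pairF ch G' else 0.
Proof. by []. Qed.

Lemma pairF_cons (t : tree) (F G : forest) :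
  pairF (t :: F) G = \sum_(p <- coprod G) pairT t p.1 * pairF F p.2.
Proof.
case: F => [|t' F] //; rewrite pairF1 -[LHS](coprod_counitr G (pairT t)).
by apply: eq_bigr => p _; rewrite pairF_nil mulrC.
Qed.

Lemma pairF_cat (F1 F2 G : forest) :
  pairF (F1 ++ F2) G = \sum_(p <- coprod G) pairF F1 p.1 * pairF F2 p.2.
Proof.
elim: F1 G => [|t F1 IH] G.
  rewrite -[LHS](coprod_counitl G (pairF F2)).
  by apply: eq_bigr => p _; rewrite pairF_nil.
rewrite cat_cons pairF_cons.
under eq_bigr do rewrite IH mulr_sumr.
rewrite (coprod_coassoc G (fun a b c => pairT t a * (pairF F1 b * pairF F2 c))).
by apply: eq_bigr => p _; rewrite pairF_cons mulr_suml; under eq_bigr do rewrite mulrA.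
Qed.

Lemma gamma_eq_Some d (G G' : forest) :
  (gamma d G == Some G') = (G == rcons G' (Node d [::])).
Proof.
rewrite /gamma; case/lastP: G => [|G t]; first by case: G'.
rewrite rev_rcons revK eqseq_rcons; case: t => e [|c ch] /=; rewrite Node_eq ?andbF //.
by case: (e == d); rewrite ?andbT ?andbF.
Qed.

Lemma pairTF_eq0 :
  (forall t : tree, forall G, tweight t != weight G -> pairT t G = 0) /\
  (forall F : forest, forall G, weight F != weight G -> pairF F G = 0).
Proof.
apply: ptree_forest_ind.
- by move=> G; rewrite pairF_nil eq_sym weight_eq0 => /negbTE ->.
- move=> t F Ht HF G neq_FG; rewrite pairF_cons big_seq big1 // => p /weight_coprod wp.
  have [wt|/Ht -> //] := eqVneq (tweight t) (weight p.1); last by rewrite mul0r.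
  by rewrite HF ?mulr0 //; apply: contra neq_FG => /eqP wF; rewrite -wp weight_cons wt wF.
- move=> d ch IH G neq_tG; rewrite pairT_Node.
  case E: (gamma d G) => [G'|] //; apply: IH; apply: contra neq_tG => /eqP wch.
  move/eqP: E; rewrite gamma_eq_Some => /eqP ->.
  by rewrite weight_rcons tweight_Node wch addn1.
Qed.

Lemma pairF_eq0 (F G : forest) : weight F != weight G -> pairF F G = 0.
Proof. exact: (proj2 pairTF_eq0). Qed.

Lemma pairTF_int :
  (forall t : tree, forall G, pairT t G \is a Num.int) /\
  (forall F : forest, forall G, pairF F G \is a Num.int).
Proof.
apply: ptree_forest_ind.
- by move=> G; rewrite pairF_nil natr_int.
- by move=> t F Ht HF G; rewrite pairF_cons; apply: rpred_sum => p _; apply: rpredM.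
- by move=> d ch IH G; rewrite pairT_Node; case: (gamma d G).
Qed.

Lemma pairF_int (F G : forest) : pairF F G \is a Num.int.
Proof. exact: (proj2 pairTF_int). Qed.

End Pairing.

Section Representable.
Variable D : eqType.
Local Notation forest := (forest D).

Definition pairH (x : Hel D) (K : forest) : rat := \sum_(p <- x) p.1 * pairF p.2 K.

Definition intH (x : Hel D) : bool := all (fun p => p.1 \is a Num.int) x.

(* In Type, so that the dual basis can be extracted without a choice axiom. *)
Definition int_representable (f : forest -> rat) : Type :=
  {x : Hel D | intH x & forall K, f K = pairH x K}.

Definition delta (F G : forest) : rat := (F == G)%:R.

Lemma int_representable_ext f g :
  (forall K, f K = g K) -> int_representable f -> int_representable g.
Proof. by move=> fg [x xZ fx]; exists x => // K; rewrite -fg. Qed.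

Lemma int_representable0 : int_representable (fun _ => 0).
Proof. by exists [::] => // K; rewrite /pairH big_nil. Qed.

Lemma int_representable_delta_nil : int_representable (delta [::]).
Proof.
by exists [:: (1, [::])] => // K; rewrite /pairH big_seq1 mul1r pairF_nil /delta eq_sym.
Qed.

Lemma int_representableD f g : int_representable f -> int_representable g ->
  int_representable (fun K => f K + g K).
Proof.
move=> [x xZ fx] [y yZ gy]; exists (x ++ y); first by rewrite /intH all_cat; apply/andP.
by move=> K; rewrite /pairH big_cat /= fx gy.
Qed.

Lemma int_representableZ (z : rat) f : z \is a Num.int -> int_representable f ->
  int_representable (fun K => z * f K).
Proof.
move=> zZ [x xZ fx]; exists [seq (z * p.1, p.2) | p <- x].
  by rewrite /intH all_map; apply/allP => p px /=; rewrite rpredM // (allP xZ).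
move=> K; rewrite fx /pairH big_map mulr_sumr.
by apply: eq_bigr => p _; rewrite mulrA.
Qed.

Lemma int_representable_sum (S : seq forest) (c : forest -> rat)
    (h : forest -> forest -> rat) :
  (forall K, K \in S -> c K \is a Num.int) ->
  (forall K, K \in S -> int_representable (h K)) ->
  int_representable (fun G => \sum_(K <- S) c K * h K G).
Proof.
elim: S => [|K S IH] cZ hR.
  by apply: int_representable_ext int_representable0 => G; rewrite big_nil.
have hK := int_representableZ (cZ K (mem_head _ _)) (hR K (mem_head _ _)).
have hS : int_representable (fun G => \sum_(K <- S) c K * h K G).
  by apply: IH => K' K'S; [apply: cZ | apply: hR]; rewrite in_cons K'S orbT.
by apply: int_representable_ext (int_representableD hK hS) => G; rewrite big_cons.
Qed.

Lemma int_representable_Bplus d f : int_representable f ->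
  int_representable (fun K => if gamma d K is Some K' then f K' else 0).
Proof.
move=> [x xZ fx]; exists [seq (p.1, [:: Bplus d p.2]) | p <- x].
  by rewrite /intH all_map.
move=> K; rewrite /pairH big_map; case E: (gamma d K) => [K'|].
  by rewrite fx /pairH; apply: eq_bigr => p _; rewrite pairF1 pairT_Node E.
by rewrite big1 // => p _; rewrite pairF1 pairT_Node E mulr0.
Qed.

Lemma int_representableM f g : int_representable f -> int_representable g ->
  int_representable (fun K => \sum_(p <- coprod K) f p.1 * g p.2).
Proof.
move=> [x xZ fx] [y yZ gy]; exists [seq (p.1 * q.1, p.2 ++ q.2) | p <- x, q <- y].
  apply/allP => r /allpairsP [[p q] [/= px qy ->]] /=.
  by rewrite rpredM // ?(allP xZ _ px) ?(allP yZ _ qy).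
move=> K; rewrite /pairH big_allpairs_dep /=.
transitivity (\sum_(r <- coprod K) \sum_(p <- x) \sum_(q <- y)
   p.1 * pairF p.2 r.1 * (q.1 * pairF q.2 r.2)).
  apply: eq_bigr => r _; rewrite fx gy /pairH mulr_suml.
  by under eq_bigr do rewrite mulr_sumr.
rewrite exchange_big; apply: eq_bigr => p _; rewrite exchange_big; apply: eq_bigr => q _.
by rewrite pairF_cat mulr_sumr; under [RHS]eq_bigr do rewrite mulrACA.
Qed.

End Representable.

Section Triangularity.
Variable D : eqType.
Local Notation forest := (forest D).

Definition last_tweight (F : forest) : nat :=
  if rev F is t :: _ then tweight t else 0.

Lemma last_tweight_rcons (F : forest) t : last_tweight (rcons F t) = tweight t.
Proof. by rewrite /last_tweight rev_rcons. Qed.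

Lemma deltaC (F G : forest) : delta F G = delta G F.
Proof. by rewrite /delta eq_sym. Qed.

Lemma sum_mul_delta (S : seq forest) (c : forest -> rat) K : uniq S ->
  \sum_(K0 <- S) c K0 * delta K0 K = (K \in S)%:R * c K.
Proof.
elim: S => [|K0 S IH]; first by rewrite big_nil in_nil mul0r.
case/andP => K0S uS; rewrite big_cons IH // in_cons /delta.
have [<-|_] := eqVneq K0 K; last by rewrite mulr0 add0r.
by rewrite (negbTE K0S) mul0r addr0 mulrC.
Qed.

Lemma sum_coprod_delta_weight (C R K : forest) :
  (weight C + weight R != weight K)%N ->
  \sum_(p <- coprod K) delta C p.1 * delta R p.2 = 0.
Proof.
move=> neqK; rewrite big_seq big1 // => p /weight_coprod wp.
rewrite /delta; have [EC|] := eqVneq C p.1; last by rewrite mul0r.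
have [ER|] := eqVneq R p.2; last by rewrite mulr0.
by move: neqK; rewrite EC ER wp eqxx.
Qed.

Lemma coprod_onto_graft (C G' K : forest) d : (weight C < last_tweight K)%N ->
  \sum_(p <- coprod K) delta C p.1 * delta (rcons G' (Node d [::])) p.2 =
  delta (rcons G' (Node d C)) K.
Proof.
case/lastP: K => [|K [e ch]] //; rewrite last_tweight_rcons tweight_Node ltnS => le_C_ch.
rewrite -cats1 big_coprod_cat.
transitivity (\sum_(p <- coprod K) (p.1 == [::])%:R * ((G' == p.2)%:R *
  ((d == e)%:R * \sum_(x <- coprod ch) (x.2 == [::])%:R * (C == x.1)%:R)) : rat).
  apply: eq_bigr => p _; rewrite coprod1 big_tcuts_Node.
  have -> : delta C (p.1 ++ [:: Node e ch]) = 0.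
    rewrite /delta; case: eqP => // EC; move: le_C_ch.
    by rewrite EC weight_cat weight1 tweight_Node; lia.
  rewrite mul0r add0r !mulr_sumr big_seq [RHS]big_seq; apply: eq_bigr => x x_ch /=.
  rewrite /delta cats1 eqseq_rcons Node_eq -!natrM !mulnb.
  have [x2nil|] := eqVneq x.2 [::]; last by rewrite !andbF.
  have wx := weight_coprod x_ch; rewrite x2nil addn0 in wx.
  rewrite eq_cat_weight ?wx //.
  by case: (p.1 == [::]); case: (C == x.1); rewrite /= ?andbF.
rewrite (coprod_counitl K (fun y => (G' == y)%:R * _)).
rewrite (coprod_counitr ch (fun y => (C == y)%:R)).
by rewrite /delta cats1 eqseq_rcons Node_eq -!natrM !mulnb.
Qed.

Lemma int_representable_delta_leaf (G' : forest) d :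
  int_representable (delta G') -> int_representable (delta (rcons G' (Node d [::]))).
Proof.
move/(int_representable_Bplus d); apply: int_representable_ext => K.
case E: (gamma d K) => [K'|].
  by move/eqP: E; rewrite gamma_eq_Some => /eqP ->; rewrite /delta eqseq_rcons eqxx andbT.
rewrite /delta; case: eqP => // EK; have := gamma_eq_Some d K G'.
by rewrite E -EK eqxx.
Qed.

End Triangularity.

Section IntegralDual.
Variable D : finType.
Local Notation forest := (forest D).

Fixpoint enum_forests (fuel n : nat) : seq forest :=
  if fuel is fuel'.+1 then
    if n is n'.+1 then
      flatten [seq [seq t :: F | t <- [seq Node d ch | d <- enum D,
                                                         ch <- enum_forests fuel' k],
                                 F <- enum_forests fuel' (n' - k)] | k <- iota 0 n]
    else [:: [::]]
  else [::].

Lemma mem_enum_forests fuel (F : forest) :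
  (weight F < fuel)%N -> F \in enum_forests fuel (weight F).
Proof.
elim: fuel F => [|fuel IH] [|[d ch] F] //.
rewrite weight_cons tweight_Node addSn ltnS => ltF.
apply/flatten_mapP; exists (weight ch); first by rewrite mem_iota; lia.
apply: allpairs_f; last by rewrite addKn; apply: IH; lia.
by apply: allpairs_f; [rewrite mem_enum | apply: IH; lia].
Qed.

Definition forests_of_weight (n : nat) : seq forest :=
  [seq F <- undup (enum_forests n.+1 n) | weight F == n].

Lemma forests_of_weight_uniq n : uniq (forests_of_weight n).
Proof. exact/filter_uniq/undup_uniq. Qed.

Lemma mem_forests_of_weight n (F : forest) :
  (F \in forests_of_weight n) = (weight F == n).
Proof.
by rewrite mem_filter mem_undup; case: eqP => // <-; apply: mem_enum_forests.
Qed.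

Lemma int_representable_delta_graft (G' C : forest) d : C != [::] ->
  int_representable (delta C) ->
  int_representable (delta (rcons G' (Node d [::]))) ->
  (forall K : forest, weight K = weight (rcons G' (Node d C)) ->
     (last_tweight K <= weight C)%N ->
     int_representable (delta K)) ->
  int_representable (delta (rcons G' (Node d C))).
Proof.
set G := rcons G' (Node d C); set R := rcons G' (Node d [::]) => C_nil reprC reprR IHl.
have wG : weight G = (weight G' + (weight C).+1)%N by rewrite weight_rcons tweight_Node.
have wR : weight R = (weight G').+1 by rewrite weight_rcons addn1.
pose h K := \sum_(p <- coprod K) delta C p.1 * delta R p.2.
have hZ K : h K \is a Num.int by apply: rpred_sum => p _; rewrite rpredM ?natr_int.
pose S := [seq K <- forests_of_weight (weight G) | (last_tweight K <= weight C)%N].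
have corr : int_representable (fun K => \sum_(K0 <- S) h K0 * delta K0 K).
  apply: int_representable_sum => [K0 _ | K0]; first exact: hZ.
  by rewrite mem_filter mem_forests_of_weight => /andP [lK0 /eqP wK0]; apply: IHl.
have := int_representableD (int_representableM reprC reprR)
  (int_representableZ (rpredN1 _) corr).
apply: int_representable_ext => K.
rewrite sum_mul_delta; last exact/filter_uniq/forests_of_weight_uniq.
rewrite mem_filter mem_forests_of_weight.
have [wK|wK] := eqVneq (weight K) (weight G); last first.
  rewrite andbF mul0r mulr0 addr0 sum_coprod_delta_weight; last first.
    by apply: contraNneq wK => <-; rewrite wG wR; apply/eqP; lia.
  by rewrite /delta; case: eqP => // EK; move: wK; rewrite EK eqxx.
have [lK|lK] := leqP (last_tweight K) (weight C); last first.
  by rewrite mul0r mulr0 addr0 coprod_onto_graft.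
rewrite mul1r mulN1r subrr /delta; case: eqP => // EK.
by move: lK; rewrite -EK /G last_tweight_rcons tweight_Node ltnn.
Qed.

Lemma int_representable_delta_step (G : forest) :
  (forall K : forest, (weight K < weight G)%N -> int_representable (delta K)) ->
  (forall K : forest, weight K = weight G -> (last_tweight K < last_tweight G)%N ->
     int_representable (delta K)) ->
  int_representable (delta G).
Proof.
case/lastP: G => [|G' [d C]] IHw IHl; first exact: int_representable_delta_nil.
have [C0 | C_nil] := eqVneq C [::].
  subst C; apply: int_representable_delta_leaf; apply: IHw.
  by rewrite weight_rcons addnS ltnS leq_addr.
have wG : weight (rcons G' (Node d C)) = (weight G' + (weight C).+1)%N.
  by rewrite weight_rcons tweight_Node.
have wC : (0 < weight C)%N by rewrite lt0n weight_eq0.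
apply: int_representable_delta_graft => // [||K wK lK].
- by apply: IHw; rewrite wG; lia.
- by apply: IHw; rewrite weight_rcons wG addn1; lia.
- by apply: IHl; rewrite // last_tweight_rcons.
Qed.

Lemma int_representable_delta (G : forest) : int_representable (delta G).
Proof.
elim/ltn_ind: (weight G) {-2}G (erefl (weight G)) => n IHn {}G wG.
elim/ltn_ind: (last_tweight G) {-2}G (erefl (last_tweight G)) wG => m IHm {}G lG wG.
apply: int_representable_delta_step => [K ltKn | K eqKn ltKm].
  by apply: (IHn _ _ K erefl); rewrite -wG.
by apply: (IHm _ _ K erefl); rewrite -?lG -?wG.
Qed.

Definition dualH (G : forest) : Hel D := s2val (int_representable_delta G).

Lemma dualH_int (G : forest) : intH (dualH G).
Proof. exact: s2valP (int_representable_delta G). Qed.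

Lemma pairH_dualH (G K : forest) : pairH (dualH G) K = delta G K.
Proof. by rewrite (s2valP' (int_representable_delta G)). Qed.

Lemma coef_cons (p : rat * forest) (x : Hel D) H :
  coef (p :: x) H = delta p.2 H * p.1 + coef x H.
Proof. by rewrite /coef big_cons /delta; case: eqP; rewrite ?mul1r ?mul0r ?add0r. Qed.

Lemma pairH_homogeneous (x : Hel D) (K : forest) :
  pairH x K = \sum_(H <- forests_of_weight (weight K)) coef x H * pairF H K.
Proof.
elim: x => [|p x IH].
  by rewrite /pairH big_nil big1 // => H _; rewrite /coef big_nil mul0r.
rewrite /pairH big_cons -/(pairH x K) IH.
under [RHS]eq_bigr do rewrite coef_cons mulrDl -mulrA mulrC deltaC.
rewrite big_split sum_mul_delta ?forests_of_weight_uniq //= mem_forests_of_weight.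
have [_ | /pairF_eq0 ->] := eqVneq (weight p.2) (weight K); first by rewrite mul1r.
by rewrite !mulr0.
Qed.

Lemma pairH_nondegenerate (c : Hel D) :
  (forall K, pairH c K = 0) -> forall F, coef c F = 0.
Proof.
move=> c0 F; set S := forests_of_weight (weight F); set k := size S.
pose nthS (i : 'I_k) := nth [::] S i.
have wS i : weight (nthS i) = weight F.
  by apply/eqP; rewrite -mem_forests_of_weight mem_nth.
have pairH_S x i :
    pairH x (nthS i) = \sum_(j < k) coef x (nthS j) * pairF (nthS j) (nthS i).
  by rewrite pairH_homogeneous wS (big_nth [::]) big_mkord.
pose M : 'M[rat]_k := \matrix_(i, j) pairF (nthS i) (nthS j).
pose X : 'M[rat]_k := \matrix_(i, j) coef (dualH (nthS i)) (nthS j).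
have XM : X *m M = 1%:M.
  apply/matrixP => i j; rewrite !mxE.
  under eq_bigr do rewrite !mxE.
  by rewrite -pairH_S pairH_dualH /delta nth_uniq ?forests_of_weight_uniq.
pose v : 'rV[rat]_k := \row_j coef c (nthS j).
have vM : v *m M = 0.
  apply/rowP => j; rewrite !mxE.
  under eq_bigr do rewrite !mxE.
  by rewrite -pairH_S c0.
have v0 : v = 0 by rewrite -[v]mulmx1 -(mulmx1C XM) mulmxA vM mul0mx.
have FS : (index F S < k)%N by rewrite index_mem mem_forests_of_weight.
have := congr1 (fun w : 'rV[rat]_k => w 0 (Ordinal FS)) v0.
by rewrite !mxE /nthS nth_index ?mem_forests_of_weight.
Qed.

End IntegralDual.

Section ZBasis.
Variable D : finType.
Local Notation forest := (forest D).

Lemma form_basisH (x : Hel D) (G : forest) : Defs.form x (basisH G) = pairH x G.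
Proof. by rewrite /form /pairH; apply: eq_bigr => p _; rewrite big_seq1 mulr1. Qed.

Lemma coef_cat (x y : Hel D) F : coef (x ++ y) F = coef x F + coef y F.
Proof. by rewrite /coef big_cat. Qed.

Lemma coef_scale a (x : Hel D) F : coef (scaleH a x) F = a * coef x F.
Proof. by rewrite /coef /scaleH big_map mulr_sumr. Qed.

Lemma pairH_cat (x y : Hel D) K : pairH (x ++ y) K = pairH x K + pairH y K.
Proof. by rewrite /pairH big_cat. Qed.

Lemma pairH_scale a (x : Hel D) K : pairH (scaleH a x) K = a * pairH x K.
Proof. by rewrite /pairH big_map mulr_sumr; under eq_bigr do rewrite -mulrA. Qed.

Lemma pairH_zcomb (e : forest -> Hel D) (c : seq (int * forest)) K :
  pairH (zcomb e c) K = \sum_(p <- c) p.1%:~R * pairH (e p.2) K.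
Proof.
rewrite /pairH big_flatten big_map.
by under eq_bigr do rewrite -/(pairH _ K) pairH_scale.
Qed.

Lemma coef_eq_pairH (x y : Hel D) :
  (forall K, pairH x K = pairH y K) -> forall F, coef x F = coef y F.
Proof.
move=> xy F; apply/eqP; rewrite -subr_eq0 -mulN1r -coef_scale -coef_cat.
by apply/eqP/pairH_nondegenerate => K; rewrite pairH_cat pairH_scale xy mulN1r subrr.
Qed.

Lemma intH_inA (x : Hel D) : intH x -> inA x.
Proof.
by move=> xZ G; rewrite /coef big_seq_cond rpred_sum // => p /andP [/(allP xZ)].
Qed.

Lemma pairH_int (x : Hel D) K : inA x -> pairH x K \is a Num.int.
Proof.
by move=> xA; rewrite pairH_homogeneous rpred_sum // => H _; rewrite rpredM ?pairF_int.
Qed.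

Lemma sum_delta_unzip2 (c : seq (int * forest)) p : uniq (unzip2 c) -> p \in c ->
  \sum_(q <- c) q.1%:~R * delta q.2 p.2 = p.1%:~R :> rat.
Proof.
elim: c => [|q c IH] //= /andP [qc uc]; rewrite in_cons big_cons.
case/predU1P => [-> | pc].
  rewrite /delta eqxx mulr1 big_seq big1 ?addr0 // => q' q'c.
  by case: eqP => [E|]; [move: qc; rewrite -E map_f | rewrite mulr0].
rewrite IH // /delta; case: eqP => [E|]; last by rewrite mulr0 add0r.
by move: qc; rewrite E map_f.
Qed.

Section DualBasis.
Variable e : forest -> Hel D.
Hypothesis pairH_e : forall F K, pairH (e F) K = delta F K.

Lemma dual_basis_inA F : inA (e F).
Proof.
move=> G; rewrite (coef_eq_pairH (y := dualH F)) ?(intH_inA (dualH_int F)) // => K.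
by rewrite pairH_e pairH_dualH.
Qed.

Lemma dual_basis_free (c : seq (int * forest)) : uniq (unzip2 c) ->
  (forall G, coef (zcomb e c) G = 0) -> forall p, p \in c -> p.1 = 0.
Proof.
move=> uc c0 p pc; apply/eqP; rewrite -(intr_eq0 rat) -(sum_delta_unzip2 uc pc).
under eq_bigr do rewrite -pairH_e.
by rewrite -pairH_zcomb pairH_homogeneous big1 // => H _; rewrite c0 mul0r.
Qed.

Lemma dual_basis_span (x : Hel D) : inA x ->
  exists c : seq (int * forest), forall G, coef x G = coef (zcomb e c) G.
Proof.
move=> xA; pose S := undup (flatten [seq forests_of_weight D (weight p.2) | p <- x]).
exists [seq (numq (pairH x F), F) | F <- S]; apply: coef_eq_pairH => K.
rewrite pairH_zcomb big_map.
under eq_bigr do rewrite /= pairH_e numqK ?pairH_int //.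
rewrite sum_mul_delta ?undup_uniq //.
have [KS | KS] := boolP (K \in S); first by rewrite mul1r.
rewrite mul0r /pairH big_seq big1 // => p px.
have [wp | /pairF_eq0 ->] := eqVneq (weight p.2) (weight K); last by rewrite mulr0.
case/negP: KS; rewrite mem_undup; apply/flatten_mapP.
by exists p => //; rewrite mem_forests_of_weight wp.
Qed.

End DualBasis.
End ZBasis.

Theorem mainTheorem5 (D : finType) (HD : (0 < #|D|)%N) :
  (exists e : forest D -> Hel D, dual_basis e) /\
  (forall e : forest D -> Hel D, dual_basis e -> is_Zbasis_of_A e).
Proof.
split; first by exists (@dualH D) => F G; rewrite form_basisH pairH_dualH.
move=> e e_dual; have pairH_e F K : pairH (e F) K = delta F K.
  by rewrite -form_basisH e_dual.
split; [exact: dual_basis_inA | exact: dual_basis_free | exact: dual_basis_span].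
Qed.
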